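(* Let $H\subseteq G$ be non-abelian simple groups such that the inclusion $H\subseteq G$ is a localization. Assume $G$ and $\mathrm{Aut}(G)$ are co-hopfian, $\mathrm{Aut}(H)$ is complete, and $\mathrm{Out}(G)$ is hyperabelian. Let $j\colon\mathrm{Aut}(H)\to\mathrm{Aut}(G)$ be an injective homomorphism with $j(c_h)=c_h^G$ for all $h\in H$. Let $N=j^{-1}(\mathrm{Inn}(G))$, let $k\colon\mathrm{Out}(H)\to\mathrm{Out}(G)$ be induced by $j$, and let $\pi\colon\mathrm{Out}(H)\to\mathrm{Aut}(H)/N$ be the canonical projection. Consider the conditions: (b) the only $\theta\in\mathrm{Aut}(\mathrm{Aut}(G))$ with $\theta\circ j=j$ is the identity; (c) for every homomorphism $\varphi'\colon\mathrm{Aut}(H)/N\to\mathrm{Aut}(G)$ there exists a unique homomorphism $\psi'\colon\mathrm{Out}(G)\to\mathrm{Aut}(G)$ with $\psi'\circ k=\varphi'\circ\pi$; (d) every homomorphism $\varphi\colon\mathrm{Aut}(H)\to\mathrm{Aut}(G)$ with $\mathrm{Inn}(H)\subseteq\ker\varphi$ satisfies $N\subseteq\ker\varphi$. Then $j$ is a localization if and only if (b), (c) and (d) hold. If in addition $\mathrm{Aut}(G)$ is complete, then $j$ is a localization if and only if (c) and (d) hold.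
   Context: A group homomorphism $i\colon X\to Y$ is a localization if for every homomorphism $\varphi\colon X\to Y$ there exists a unique homomorphism $\psi\colon Y\to Y$ with $\psi\circ i=\varphi$; for $H\subseteq G$, ''$H\subseteq G$ is a localization'' means the inclusion map is. A group is co-hopfian if every injective endomorphism is an automorphism; complete if it has trivial center and every automorphism is inner. A group $A$ is hyperabelian if every non-trivial quotient of $A$ has a non-trivial abelian normal subgroup. For $h\in H\subseteq G$, $c_h$ is conjugation by $h$ on $H$ and $c_h^G$ is conjugation by $h$ on $G$. $\mathrm{Out}(X)=\mathrm{Aut}(X)/\mathrm{Inn}(X)$. *)

(* Groups are possibly infinite, so we develop a small theory of
   setoid groups (a carrier with an equivalence relation playing the role of
   equality), which makes quotients (Out(G), Aut(H)/N) directly available. *)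
From Stdlib Require Import Setoid Morphisms.

Record grp := Grp {
  car :> Type;
  geq : car -> car -> Prop;
  gmul : car -> car -> car;
  gone : car;
  ginv : car -> car;
  geq_refl : forall x, geq x x;
  geq_sym : forall x y, geq x y -> geq y x;
  geq_trans : forall x y z, geq x y -> geq y z -> geq x z;
  gmul_compat : forall x x' y y', geq x x' -> geq y y' -> geq (gmul x y) (gmul x' y');
  ginv_compat : forall x x', geq x x' -> geq (ginv x) (ginv x');
  gmulA : forall x y z, geq (gmul x (gmul y z)) (gmul (gmul x y) z);
  gmul1l : forall x, geq (gmul gone x) x;
  gmul1r : forall x, geq (gmul x gone) x;
  gmulVl : forall x, geq (gmul (ginv x) x) gone;
  gmulVr : forall x, geq (gmul x (ginv x)) gone }.

Arguments geq {_} _ _.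
Arguments gmul {_} _ _.
Arguments gone {_}.
Arguments ginv {_} _.
Arguments geq_refl {_} _.
Arguments geq_sym {_} _ _ _.
Arguments geq_trans {_} _ _ _ _ _.
Arguments gmul_compat {_} _ _ _ _ _ _.
Arguments ginv_compat {_} _ _ _.
Arguments gmulA {_} _ _ _.
Arguments gmul1l {_} _.
Arguments gmul1r {_} _.
Arguments gmulVl {_} _.
Arguments gmulVr {_} _.

Notation "x =g y" := (geq x y) (at level 70, no associativity).
Infix "*g" := gmul (at level 40, left associativity).

#[export] Instance geq_Equiv (G : grp) : Equivalence (@geq G).
Proof. split; [exact geq_refl | exact geq_sym | exact geq_trans]. Qed.
#[export] Instance gmul_Proper (G : grp) : Proper (geq ==> geq ==> geq) (@gmul G).
Proof. intros ? ? ? ? ? ?; apply gmul_compat; assumption. Qed.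
#[export] Instance ginv_Proper (G : grp) : Proper (geq ==> geq) (@ginv G).
Proof. intros ? ? ?; apply ginv_compat; assumption. Qed.

Section GrpTheory.
Variable G : grp.
Implicit Types x y z g : G.

Lemma inv_unique x y : x *g y =g gone -> y =g ginv x.
Proof.
  intro H. rewrite <- (gmul1l y), <- (gmulVl x), <- gmulA, H, gmul1r. reflexivity.
Qed.
Lemma inv_mul x y : ginv (x *g y) =g ginv y *g ginv x.
Proof.
  symmetry; apply inv_unique. rewrite <- gmulA, (gmulA y (ginv y) (ginv x)), gmulVr,
    gmul1l, gmulVr. reflexivity.
Qed.
Lemma inv_inv x : ginv (ginv x) =g x.
Proof. symmetry; apply inv_unique; apply gmulVl. Qed.
Lemma inv_one : ginv (@gone G) =g gone.
Proof. symmetry; apply inv_unique; apply gmul1l. Qed.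
Lemma mulKV g z : ginv g *g (g *g z) =g z.
Proof. rewrite gmulA, gmulVl, gmul1l; reflexivity. Qed.
Lemma mulVK g z : g *g (ginv g *g z) =g z.
Proof. rewrite gmulA, gmulVr, gmul1l; reflexivity. Qed.
Lemma idem_one x : x *g x =g x -> x =g gone.
Proof.
  intro H. transitivity (ginv x *g (x *g x)).
  symmetry; apply mulKV. rewrite H, gmulVl. reflexivity.
Qed.
End GrpTheory.

Ltac gsimpl := repeat (rewrite <- gmulA || rewrite mulKV || rewrite mulVK
  || rewrite gmulVl || rewrite gmulVr || rewrite gmul1l || rewrite gmul1r
  || rewrite inv_mul || rewrite inv_inv || rewrite inv_one).

Definition conj (G : grp) (g x : G) : G := g *g x *g ginv g.
Arguments conj {_} _ _.

Record hom (A B : grp) := Hom {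
  hfun :> A -> B;
  hfun_compat : forall x y, x =g y -> hfun x =g hfun y;
  hfun_mul : forall x y, hfun (x *g y) =g hfun x *g hfun y }.
Arguments hfun {_ _} _ _.
Arguments hfun_compat {_ _} _ _ _ _.
Arguments hfun_mul {_ _} _ _ _.

#[export] Instance hfun_Proper A B (f : hom A B) : Proper (geq ==> geq) (hfun f).
Proof. intros ? ? ?; apply hfun_compat; assumption. Qed.

Lemma hom_one A B (f : hom A B) : f gone =g gone.
Proof. apply idem_one. rewrite <- hfun_mul, gmul1l. reflexivity. Qed.
Lemma hom_inv A B (f : hom A B) x : f (ginv x) =g ginv (f x).
Proof. apply inv_unique. rewrite <- hfun_mul, gmulVr, hom_one. reflexivity. Qed.

Definition injective {A B : grp} (f : hom A B) : Prop := forall x y, f x =g f y -> x =g y.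
Definition surjective {A B : grp} (f : hom A B) : Prop := forall y, exists x, f x =g y.

Record aut (G : grp) := Aut {
  afun :> G -> G;
  ainv : G -> G;
  afun_compat : forall x y, x =g y -> afun x =g afun y;
  ainv_compat : forall x y, x =g y -> ainv x =g ainv y;
  afun_mul : forall x y, afun (x *g y) =g afun x *g afun y;
  afun_ainv : forall x, afun (ainv x) =g x;
  ainv_afun : forall x, ainv (afun x) =g x }.
Arguments afun {_} _ _.
Arguments ainv {_} _ _.
Arguments afun_compat {_} _ _ _ _.
Arguments ainv_compat {_} _ _ _ _.
Arguments afun_mul {_} _ _ _.
Arguments afun_ainv {_} _ _.
Arguments ainv_afun {_} _ _.

#[export] Instance afun_Proper G (a : aut G) : Proper (geq ==> geq) (afun a).
Proof. intros ? ? ?; apply afun_compat; assumption. Qed.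
#[export] Instance ainv_Proper G (a : aut G) : Proper (geq ==> geq) (ainv a).
Proof. intros ? ? ?; apply ainv_compat; assumption. Qed.

Lemma ainv_mul G (a : aut G) x y : ainv a (x *g y) =g ainv a x *g ainv a y.
Proof.
  rewrite <- (ainv_afun a (ainv a x *g ainv a y)), afun_mul, !afun_ainv. reflexivity.
Qed.
Lemma aut_ginv G (a : aut G) x : a (ginv x) =g ginv (a x).
Proof. apply inv_unique. rewrite <- afun_mul, gmulVr.
  apply idem_one. rewrite <- afun_mul, gmul1l. reflexivity. Qed.

Definition aut_comp G (a b : aut G) : aut G.
Proof.
  refine (@Aut G (fun x => a (b x)) (fun x => ainv b (ainv a x)) _ _ _ _ _).
  - intros x y H; rewrite H; reflexivity.
  - intros x y H; rewrite H; reflexivity.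
  - intros x y; rewrite !afun_mul; reflexivity.
  - intro x; rewrite !afun_ainv; reflexivity.
  - intro x; rewrite !ainv_afun; reflexivity.
Defined.

Definition aut_id G : aut G.
Proof.
  refine (@Aut G (fun x => x) (fun x => x) _ _ _ _ _); intros; first [assumption | reflexivity].
Defined.

Definition aut_inv G (a : aut G) : aut G.
Proof.
  refine (@Aut G (ainv a) (afun a) _ _ _ _ _).
  - apply ainv_compat.
  - apply afun_compat.
  - apply ainv_mul.
  - apply ainv_afun.
  - apply afun_ainv.
Defined.

Definition autg (G : grp) : grp.
Proof.
  refine (@Grp (aut G) (fun a b => forall x, a x =g b x) (@aut_comp G) (aut_id G)
            (@aut_inv G) _ _ _ _ _ _ _ _ _ _); simpl.
  - intros; reflexivity.
  - intros a b H x; symmetry; apply H.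
  - intros a b c H1 H2 x; rewrite H1; apply H2.
  - intros a a' b b' H1 H2 x. rewrite H2; apply H1.
  - intros a a' H x.
    rewrite <- (afun_ainv a' x) at 1. rewrite <- H, ainv_afun. reflexivity.
  - intros; reflexivity.
  - intros; reflexivity.
  - intros; reflexivity.
  - intros a x; apply ainv_afun.
  - intros a x; apply afun_ainv.
Defined.

Definition innaut {G : grp} (g : G) : aut G.
Proof.
  refine (@Aut G (conj g) (conj (ginv g)) _ _ _ _ _); unfold conj.
  - intros x y H; rewrite H; reflexivity.
  - intros x y H; rewrite H; reflexivity.
  - intros x y; gsimpl; reflexivity.
  - intros x; gsimpl; reflexivity.
  - intros x; gsimpl; reflexivity.
Defined.

Record normal_subgroup (A : grp) (P : A -> Prop) : Prop := {
  ns_compat : forall x y, x =g y -> P x -> P y;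
  ns_one : P gone;
  ns_mul : forall x y, P x -> P y -> P (x *g y);
  ns_inv : forall x, P x -> P (ginv x);
  ns_conj : forall g x, P x -> P (g *g x *g ginv g) }.
Arguments normal_subgroup {_} _.
Arguments ns_compat {_ _} _ _ _ _ _.
Arguments ns_one {_ _} _.
Arguments ns_mul {_ _} _ _ _ _ _.
Arguments ns_inv {_ _} _ _ _.
Arguments ns_conj {_ _} _ _ _ _.

Lemma ns_eq {A : grp} {P : A -> Prop} (hP : normal_subgroup P) x y : x =g y -> P (x *g ginv y).
Proof. intro H. apply (ns_compat hP gone). rewrite H, gmulVr; reflexivity. apply (ns_one hP). Qed.

Definition quot {A : grp} {P : A -> Prop} (hP : normal_subgroup P) : grp.
Proof.
  refine (@Grp A (fun x y => P (x *g ginv y)) (@gmul A) gone (@ginv A)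
            _ _ _ _ _ _ _ _ _ _).
  - intro x; apply (ns_eq hP); reflexivity.
  - intros x y H. apply (ns_compat hP (ginv (x *g ginv y))). gsimpl; reflexivity.
    apply (ns_inv hP), H.
  - intros x y z H1 H2. apply (ns_compat hP ((x *g ginv y) *g (y *g ginv z))).
    gsimpl; reflexivity. apply (ns_mul hP); assumption.
  - intros x x' y y' H1 H2.
    apply (ns_compat hP ((x *g (y *g ginv y') *g ginv x) *g (x *g ginv x'))).
    gsimpl; reflexivity. apply (ns_mul hP); [apply (ns_conj hP) |]; assumption.
  - intros x x' H.
    apply (ns_compat hP (ginv x *g ginv (x *g ginv x') *g ginv (ginv x))).
    gsimpl; reflexivity. apply (ns_conj hP), (ns_inv hP), H.
  - intros; apply (ns_eq hP), gmulA.
  - intros; apply (ns_eq hP), gmul1l.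
  - intros; apply (ns_eq hP), gmul1r.
  - intros; apply (ns_eq hP), gmulVl.
  - intros; apply (ns_eq hP), gmulVr.
Defined.

Definition inner {G : grp} (a : aut G) : Prop := exists g : G, forall x, a x =g conj g x.

Lemma inn_normal (G : grp) : @normal_subgroup (autg G) (@inner G).
Proof.
  split.
  - intros a b Hab [g Hg]. exists g. intro x. rewrite <- (Hab x). apply Hg.
  - exists gone. intro x. simpl. unfold conj. gsimpl. reflexivity.
  - intros a b [g Hg] [h Hh]. exists (g *g h). intro x. simpl.
    rewrite Hh, Hg. unfold conj. gsimpl. reflexivity.
  - intros a [g Hg]. exists (ginv g). intro x. simpl.
    transitivity (ainv a (a (conj (ginv g) x))).
    + apply ainv_compat. rewrite Hg. unfold conj. gsimpl. reflexivity.
    + apply ainv_afun.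
  - intros b a [g Hg]. exists (b g). intro x. simpl.
    rewrite Hg. unfold conj. rewrite !afun_mul, afun_ainv, aut_ginv. reflexivity.
Qed.

Definition outg (G : grp) : grp := quot (inn_normal G).

Lemma preim_normal {A B : grp} (f : hom A B) {P : B -> Prop} (hP : normal_subgroup P) :
  @normal_subgroup A (fun x => P (f x)).
Proof.
  split.
  - intros x y H. apply (ns_compat hP). rewrite H; reflexivity.
  - apply (ns_compat hP gone). symmetry; apply hom_one. apply (ns_one hP).
  - intros x y Hx Hy. apply (ns_compat hP (f x *g f y)). symmetry; apply hfun_mul.
    apply (ns_mul hP); assumption.
  - intros x Hx. apply (ns_compat hP (ginv (f x))). symmetry; apply hom_inv.
    apply (ns_inv hP); assumption.
  - intros g x Hx. apply (ns_compat hP (f g *g f x *g ginv (f g))).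
    rewrite !hfun_mul, hom_inv; reflexivity. apply (ns_conj hP); assumption.
Qed.

Definition autH_mod_N {H G : grp} (j : hom (autg H) (autg G)) : grp :=
  quot (preim_normal j (inn_normal G)).

Definition nonabelian (A : grp) : Prop := exists x y : A, ~ (x *g y =g y *g x).

Definition simple (A : grp) : Prop :=
  (exists x : A, ~ (x =g gone)) /\
  forall P : A -> Prop, normal_subgroup P ->
    (forall x, P x -> x =g gone) \/ (forall x, P x).

Definition cohopfian (A : grp) : Prop :=
  forall f : hom A A, injective f -> surjective f.

Definition trivial_center (A : grp) : Prop :=
  forall z : A, (forall x, z *g x =g x *g z) -> z =g gone.

Definition complete (A : grp) : Prop := trivial_center A /\ forall a : aut A, inner a.

Definition hyperabelian (A : grp) : Prop :=
  forall (P : A -> Prop) (hP : normal_subgroup P),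
    (exists x : quot hP, ~ (x =g gone)) ->
    exists M : quot hP -> Prop,
      normal_subgroup M /\
      (forall x y, M x -> M y -> x *g y =g y *g x) /\
      (exists x, M x /\ ~ (x =g gone)).

Definition localization {X Y : grp} (i : hom X Y) : Prop :=
  forall phi : hom X Y, exists psi : hom Y Y,
    (forall x, psi (i x) =g phi x) /\
    (forall psi' : hom Y Y, (forall x, psi' (i x) =g phi x) -> forall y, psi' y =g psi y).

Definition cond_b {H G : grp} (j : hom (autg H) (autg G)) : Prop :=
  forall theta : aut (autg G), (forall a, theta (j a) =g j a) -> forall b, theta b =g b.

Definition cond_c {H G : grp} (j : hom (autg H) (autg G))
  (k : hom (outg H) (outg G)) (pi : hom (outg H) (autH_mod_N j)) : Prop :=
  forall phi' : hom (autH_mod_N j) (autg G),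
    exists psi' : hom (outg G) (autg G),
      (forall x, psi' (k x) =g phi' (pi x)) /\
      (forall psi'' : hom (outg G) (autg G),
          (forall x, psi'' (k x) =g phi' (pi x)) -> forall y, psi'' y =g psi' y).

Definition cond_d {H G : grp} (j : hom (autg H) (autg G)) : Prop :=
  forall phi : hom (autg H) (autg G),
    (forall a, @inner H a -> phi a =g gone) ->
    (forall a, @inner G (j a) -> phi a =g gone).

From Stdlib Require Import Setoid Morphisms ClassicalEpsilon.
From mathcomp Require classical_sets.

(* The forward direction is formal: (b) is the uniqueness part of the universal
   property applied to [theta] and the identity, (d) holds because any extension
   [psi] of [phi] kills every [c_(i h)] and hence all of [Inn(G)] ([G] is simple),
   and (c) follows by factoring extensions through [Out(G)] and [Aut(H)/N].

   For the converse, let [phi : Aut(H) -> Aut(G)]; as [H] is simple, [phi] is either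
   trivial or injective on [Inn(H)].  In the first case (d) makes [phi] factor
   through [Aut(H)/N] and (c) provides the unique extension.  In the second case,
   since [Out(G)] is hyperabelian and [H] is simple non-abelian, [phi] maps [Inn(H)]
   into [Inn(G)], so [phi c_h = c_(f h)] for a homomorphism [f : H -> G]; [f] extends
   along the localization [i] to an automorphism [alpha] of the co-hopfian group [G],
   conjugation by [alpha] extends [phi], and (b) together with co-hopficity of
   [Aut(G)] gives uniqueness.  Finally, when [Aut(G)] is complete, (b) is automatic. *)

Definition commute {X : grp} (x y : X) : Prop := x *g y =g y *g x.

Lemma eq_of_div (X : grp) (x y : X) : x *g ginv y =g gone -> x =g y.
Proof.
  intro E. transitivity (x *g ginv y *g y); [gsimpl; reflexivity|].
  rewrite E, gmul1l; reflexivity.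
Qed.

Lemma eq_of_ldiv (X : grp) (x y : X) : ginv x *g y =g gone -> x =g y.
Proof.
  intro E. symmetry. transitivity (x *g (ginv x *g y)); [gsimpl; reflexivity|].
  rewrite E; gsimpl; reflexivity.
Qed.

Lemma commute_of_conj_fix (X : grp) (b c : X) : b *g c *g ginv b =g c -> commute b c.
Proof. intro E. unfold commute. rewrite <- E at 2. gsimpl. reflexivity. Qed.

Lemma conj_fix_of_commute (X : grp) (b c : X) : commute b c -> b *g c *g ginv b =g c.
Proof. intro E. unfold commute in E. rewrite E. gsimpl. reflexivity. Qed.

Lemma commute_ldiv_of_conj (X : grp) (u v w : X) :
  u *g w *g ginv u =g v *g w *g ginv v -> commute (ginv u *g v) w.
Proof.
  intro E. unfold commute. transitivity (ginv u *g (v *g w *g ginv v) *g v).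
  - gsimpl; reflexivity.
  - rewrite <- E. gsimpl; reflexivity.
Qed.

Lemma commute_conj (X : grp) (a b c : X) :
  commute b (a *g c *g ginv a) -> commute (ginv a *g b *g a) c.
Proof.
  unfold commute. intro E. transitivity (ginv a *g (b *g (a *g c *g ginv a)) *g a).
  - gsimpl; reflexivity.
  - rewrite E. gsimpl; reflexivity.
Qed.

Lemma conj_trivial (X : grp) (a b : X) : ginv a *g b *g a =g gone -> b =g gone.
Proof.
  intro E. transitivity (a *g (ginv a *g b *g a) *g ginv a); [gsimpl; reflexivity|].
  rewrite E. gsimpl. reflexivity.
Qed.

Definition hcomp {A B C : grp} (f : hom A B) (g : hom B C) : hom A C.
Proof.
  refine (@Hom A C (fun x => g (f x)) _ _).
  - intros x y E; rewrite E; reflexivity.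
  - intros x y; rewrite !hfun_mul; reflexivity.
Defined.

Definition idhom (X : grp) : hom X X :=
  @Hom X X (fun x => x) (fun x y E => E) (fun x y => geq_refl _).

Definition hom_of_aut {X : grp} (a : aut X) : hom X X :=
  @Hom X X (afun a) (afun_compat a) (afun_mul a).

Definition conjhom {X : grp} (a : X) : hom X X := hom_of_aut (innaut a).

Definition innhom (G : grp) : hom G (autg G).
Proof.
  refine (@Hom G (autg G) (@innaut G) _ _).
  - intros x y E z. simpl. unfold conj. rewrite E. reflexivity.
  - intros x y z. simpl. unfold conj. gsimpl. reflexivity.
Defined.

#[local] Instance innaut_Proper (G : grp) :
  Proper (geq ==> @geq (autg G)) (@innaut G).
Proof. intros x y E. exact (hfun_compat (innhom G) x y E). Qed.

Lemma hom_conj (X Y : grp) (f : hom X Y) (a b : X) :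
  f (a *g b *g ginv a) =g f a *g f b *g ginv (f a).
Proof. rewrite !hfun_mul, hom_inv. reflexivity. Qed.

Lemma hom_injective (X Y : grp) (f : hom X Y) :
  (forall x, f x =g gone -> x =g gone) -> injective f.
Proof.
  intros K x y E. apply eq_of_div, K. rewrite hfun_mul, hom_inv, E, gmulVr. reflexivity.
Qed.

Lemma aut_injective (X : grp) (a : aut X) x y : a x =g a y -> x =g y.
Proof. intro E. rewrite <- (ainv_afun a x), <- (ainv_afun a y), E. reflexivity. Qed.

Definition aut_of_bij (X : grp) (f : hom X X) (fi : injective f) (fs : surjective f) : aut X.
Proof.
  pose (g := fun y => proj1_sig (constructive_indefinite_description _ (fs y))).
  assert (fg : forall y, f (g y) =g y)
    by (intro y; exact (proj2_sig (constructive_indefinite_description _ (fs y)))).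
  refine (@Aut X f g (hfun_compat f) _ (hfun_mul f) fg _).
  - intros x y E. apply fi. rewrite !fg. exact E.
  - intro x. apply fi. rewrite fg. reflexivity.
Defined.

Definition projQ {A : grp} {P : A -> Prop} (hP : normal_subgroup P) : hom A (quot hP).
Proof.
  refine (@Hom A (quot hP) (fun a => a) _ _).
  - intros x y E. apply (ns_eq hP). exact E.
  - intros x y. apply (@geq_refl (quot hP)).
Defined.

Definition quot_lift {A B : grp} {P : A -> Prop} (hP : normal_subgroup P) (f : hom A B)
  (Kf : forall x, P x -> f x =g gone) : hom (quot hP) B.
Proof.
  refine (@Hom (quot hP) B (fun a => f a) _ (hfun_mul f)).
  intros x y E. apply eq_of_div. rewrite <- hom_inv, <- hfun_mul. apply Kf. exact E.
Defined.

Lemma conj_innaut (G : grp) (b : aut G) (g : G) :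
  @geq (autg G) ((b : autg G) *g innaut g *g ginv (b : autg G)) (innaut (b g)).
Proof.
  intro z. simpl. unfold conj. rewrite !afun_mul, afun_ainv, aut_ginv. reflexivity.
Qed.

Lemma inner_innaut (G : grp) (g : G) : inner (innaut g).
Proof. exists g. intro; reflexivity. Qed.

Lemma innaut_inj (G : grp) : trivial_center G -> forall g h : G,
  @geq (autg G) (innaut g) (innaut h) -> g =g h.
Proof.
  intro Z. apply hom_injective with (f := innhom G). intros g Eg. apply Z. intro x.
  specialize (Eg x). simpl in Eg. unfold conj in Eg.
  rewrite <- Eg at 2. gsimpl. reflexivity.
Qed.

Lemma fix_of_commute_innaut (G : grp) (b : aut G) (g : G) : trivial_center G ->
  @commute (autg G) b (innaut g) -> b g =g g.
Proof.
  intros Z E. apply innaut_inj; [exact Z|].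
  rewrite <- conj_innaut. apply conj_fix_of_commute. exact E.
Qed.
Lemma trivial_normal (G : grp) : @normal_subgroup G (fun x => x =g gone).
Proof.
  split.
  - intros x y E1 E2. rewrite <- E1; exact E2.
  - reflexivity.
  - intros x y Ex Ey. rewrite Ex, Ey, gmul1l; reflexivity.
  - intros x Ex. rewrite Ex, inv_one; reflexivity.
  - intros g x Ex. rewrite Ex, gmul1r, gmulVr; reflexivity.
Qed.

Lemma hom_simple_dichotomy (X Y : grp) (f : hom X Y) : simple X ->
  (forall x, f x =g gone) \/ injective f.
Proof.
  intros [_ S]. destruct (S _ (preim_normal f (trivial_normal Y))) as [K|K].
  - right. apply hom_injective. exact K.
  - left. exact K.
Qed.

Lemma simple_trivial_center (G : grp) : simple G -> nonabelian G -> trivial_center G.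
Proof.
  intros [_ S] [a [b Nab]].
  assert (Z : @normal_subgroup G (fun z => forall x, z *g x =g x *g z)).
  { split.
    - intros x y E Cx z. rewrite <- E. apply Cx.
    - intro x. rewrite gmul1l, gmul1r; reflexivity.
    - intros x y Cx Cy z. rewrite <- gmulA, Cy, gmulA, Cx, gmulA; reflexivity.
    - intros x Cx z. transitivity (ginv x *g (z *g x) *g ginv x).
      + gsimpl. reflexivity.
      + rewrite <- (Cx z). gsimpl. reflexivity.
    - intros g x Cx z. rewrite <- (gmulA g x), <- gmulA.
      rewrite <- (gmulA x), (Cx (ginv g *g z)). gsimpl. rewrite Cx. gsimpl. reflexivity. }
  destruct (S _ Z) as [K|K].
  - intros z Cz. apply K, Cz.
  - exfalso. apply Nab, K.
Qed.

(* If [G] has trivial center, a homomorphism out of [Aut(G)] that is injective on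
   [Inn(G)] is injective: an element [b] of its kernel satisfies
   [c_(b g) = b c_g b^-1 = c_g] modulo the kernel, hence [b g = g]. *)
Lemma hom_aut_injective (G Y : grp) (psi : hom (autg G) Y) : trivial_center G ->
  (forall g, psi (innaut g) =g gone -> g =g gone) -> injective psi.
Proof.
  intros Z K. apply hom_injective. intros b Kb g. change (b g =g g).
  apply eq_of_div, K.
  transitivity (psi ((b : autg G) *g innaut g *g ginv (b : autg G) *g ginv (innaut g : autg G))).
  - apply hfun_compat. rewrite conj_innaut. symmetry.
    intro z. simpl. unfold conj. gsimpl. reflexivity.
  - rewrite !hfun_mul, !hom_inv, Kb. gsimpl. reflexivity.
Qed.

Lemma inner_hom_lift (X G : grp) (phi : hom X (autg G)) : trivial_center G ->
  (forall x, inner (phi x)) ->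
  exists f : hom X G, forall x, @geq (autg G) (phi x) (innaut (f x)).
Proof.
  intros Z Inn.
  pose (f x := proj1_sig (constructive_indefinite_description _ (Inn x))).
  assert (Ef : forall x, @geq (autg G) (phi x) (innaut (f x)))
    by (intro x; exact (proj2_sig (constructive_indefinite_description _ (Inn x)))).
  assert (fc : forall x y, x =g y -> f x =g f y).
  { intros x y E. apply (innaut_inj G Z). rewrite <- !Ef. apply hfun_compat, E. }
  assert (fm : forall x y, f (x *g y) =g f x *g f y).
  { intros x y. apply (innaut_inj G Z).
    rewrite <- Ef, hfun_mul, !Ef. symmetry. apply (hfun_mul (innhom G)). }
  exists (@Hom X G f fc fm). exact Ef.
Qed.
(* Two endomorphisms of [Y] agreeing on the image of a localization [i] agree:
   both are the unique extension of their common restriction along [i]. *)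
Lemma localization_ext {X Y : grp} (i : hom X Y) : localization i ->
  forall psi1 psi2 : hom Y Y, (forall x, psi1 (i x) =g psi2 (i x)) ->
  forall y, psi1 y =g psi2 y.
Proof.
  intros L psi1 psi2 E y. destruct (L (hcomp i psi2)) as [psi [_ U]].
  transitivity (psi y).
  - apply (U psi1). exact E.
  - symmetry. apply (U psi2). intro; reflexivity.
Qed.

(* For a localization [i : X -> G] with [G] centerless, an automorphism of [G]
   commuting with every [c_(i x)] fixes [i(X)] pointwise, hence is the identity. *)
Lemma localization_centralizer {X G : grp} (i : hom X G) : localization i ->
  trivial_center G -> forall b : aut G,
  (forall x, @commute (autg G) b (innaut (i x))) -> @geq (autg G) b gone.
Proof.
  intros L Z b C y. apply (localization_ext i L (hom_of_aut b) (idhom G)).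
  intro x. apply fix_of_commute_innaut; [exact Z | apply C].
Qed.

Lemma localization_extends_to_aut {X Y : grp} (i : hom X Y) :
  localization i -> simple Y -> cohopfian Y ->
  forall f : hom X Y, (exists x, ~ f x =g gone) ->
  exists a : aut Y, forall x, a (i x) =g f x.
Proof.
  intros L sY cY f [x0 Nx0]. destruct (L f) as [e [Ee _]].
  destruct (hom_simple_dichotomy _ _ e sY) as [Ke | Ie].
  - exfalso. apply Nx0. rewrite <- Ee. apply Ke.
  - exists (aut_of_bij Y e Ie (cY e Ie)). exact Ee.
Qed.

(* Hyperabelian groups receive no nontrivial homomorphism from a non-abelian
   simple group.  Given an injective [f : X -> A], Zorn's lemma yields a normal
   subgroup [P] of [A] maximal with [P ∩ f(X) = 1]; a nontrivial abelian normal
   subgroup [M] of [A/P] either meets the image of [X] trivially (contradicting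
   maximality of [P]) or contains it (making [X] abelian). *)

(* [Y] together with the identity; this makes the union of the empty chain a subgroup. *)
Definition with_one {A : grp} (Y : A -> Prop) (x : A) : Prop := x =g gone \/ Y x.

Definition chain {T : Type} (F : (T -> Prop) -> Prop) : Prop :=
  forall Y Z, F Y -> F Z -> (forall t, Y t -> Z t) \/ (forall t, Z t -> Y t).

Definition chain_union {T : Type} (F : (T -> Prop) -> Prop) (t : T) : Prop :=
  exists2 Y, F Y & Y t.

Lemma zorn_predicates (T : Type) (P : (T -> Prop) -> Prop) :
  (forall F, (forall Y, F Y -> P Y) -> chain F -> P (chain_union F)) ->
  exists Y0, P Y0 /\
    forall Y, (forall t, Y0 t -> Y t) -> ~ (forall t, Y t -> Y0 t) -> ~ P Y.
Proof.
  intro HF. destruct (@classical_sets.Zorn_bigcup T P) as [Y0 [PY0 Max]].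
  - intros F FP Ftot. apply (HF F FP Ftot).
  - exists Y0. split; [exact PY0|]. intros Y S1 S2 PY. apply (Max Y); [split|]; assumption.
Qed.

Section ChainUnion.
Variables (A : grp) (F : (A -> Prop) -> Prop).
Hypotheses (FN : forall Y, F Y -> normal_subgroup (with_one Y)) (Fc : chain F).

Lemma chain_union_pair x y : with_one (chain_union F) x -> with_one (chain_union F) y ->
  (x =g gone /\ y =g gone) \/ exists2 Y, F Y & (with_one Y x /\ with_one Y y).
Proof.
  intros [Ex|[Y FY Yx]] [Ey|[Z FZ Zy]].
  - left; split; assumption.
  - right; exists Z; [|split; [left|right]]; assumption.
  - right; exists Y; [|split; [right|left]]; assumption.
  - right. destruct (Fc Y Z FY FZ) as [S|S].
    + exists Z; [|split; right]; auto.
    + exists Y; [|split; right]; auto.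
Qed.

Lemma with_one_union Y z : F Y -> with_one Y z -> with_one (chain_union F) z.
Proof. intros FY [E|Yz]; [left; exact E | right; exists Y; assumption]. Qed.

Lemma chain_union_normal : normal_subgroup (with_one (chain_union F)).
Proof.
  split.
  - intros x y E Ux. destruct (chain_union_pair x x Ux Ux) as [[Ex _]|[Y FY [Yx _]]].
    + left. rewrite <- E. exact Ex.
    + apply (with_one_union Y); [exact FY|]. exact (ns_compat (FN Y FY) x y E Yx).
  - left; reflexivity.
  - intros x y Ux Uy. destruct (chain_union_pair x y Ux Uy) as [[Ex Ey]|[Y FY [Yx Yy]]].
    + left. rewrite Ex, Ey, gmul1l. reflexivity.
    + apply (with_one_union Y); [exact FY|]. exact (ns_mul (FN Y FY) x y Yx Yy).
  - intros x Ux. destruct (chain_union_pair x x Ux Ux) as [[Ex _]|[Y FY [Yx _]]].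
    + left. rewrite Ex, inv_one. reflexivity.
    + apply (with_one_union Y); [exact FY|]. exact (ns_inv (FN Y FY) x Yx).
  - intros g x Ux. destruct (chain_union_pair x x Ux Ux) as [[Ex _]|[Y FY [Yx _]]].
    + left. rewrite Ex, gmul1r, gmulVr. reflexivity.
    + apply (with_one_union Y); [exact FY|]. exact (ns_conj (FN Y FY) g x Yx).
Qed.
End ChainUnion.

Section Hyperabelian.
Variables (A X : grp) (f : hom X A).

Definition avoiding (Y : A -> Prop) : Prop :=
  normal_subgroup (with_one Y) /\ (forall h, with_one Y (f h) -> h =g gone).

Lemma exists_maximal_avoiding : injective f ->
  exists Y0, avoiding Y0 /\
    forall Y, (forall t, Y0 t -> Y t) -> ~ (forall t, Y t -> Y0 t) -> ~ avoiding Y.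
Proof.
  intro If. apply zorn_predicates. intros F FA Fc. split.
  - apply chain_union_normal; [intros Y FY; exact (proj1 (FA Y FY)) | exact Fc].
  - intros h [E|[Y FY Yh]].
    + apply If. rewrite E, hom_one. reflexivity.
    + apply (proj2 (FA Y FY)). right; exact Yh.
Qed.

Section Maximal.
Variables (Y0 : A -> Prop) (hP : normal_subgroup (with_one Y0)).
Hypothesis (meet0 : forall h, with_one Y0 (f h) -> h =g gone).
Variables (M : quot hP -> Prop) (hM : normal_subgroup M).

Lemma quot_normal_with_one (x : A) : @with_one A M x -> M x.
Proof.
  intros [E|Mx]; [|exact Mx].
  apply (ns_compat hM gone); [|apply (ns_one hM)].
  simpl. apply (ns_eq hP). symmetry; exact E.
Qed.

Lemma quot_normal_contains (t : A) : Y0 t -> M t.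
Proof.
  intro Yt. apply (ns_compat hM gone); [|apply (ns_one hM)].
  apply (@geq_sym (quot hP)). simpl. apply (ns_compat hP t); [gsimpl; reflexivity|].
  right; exact Yt.
Qed.

Lemma quot_normal_lift : normal_subgroup (@with_one A M).
Proof.
  split.
  - intros x y E Mx. right. apply (ns_compat hM x); [simpl; apply (ns_eq hP), E|].
    apply quot_normal_with_one, Mx.
  - left; reflexivity.
  - intros x y Mx My. right. apply (ns_mul hM); apply quot_normal_with_one; assumption.
  - intros x Mx. right. apply (ns_inv hM); apply quot_normal_with_one; assumption.
  - intros g x Mx. right. apply (ns_conj hM); apply quot_normal_with_one; assumption.
Qed.

Lemma commutators_trivial_of_abelian :
  (forall x y, M x -> M y -> x *g y =g y *g x) -> (forall h, M (f h)) ->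
  forall a b : X, a *g b =g b *g a.
Proof.
  intros Mab Mf a b. apply eq_of_div, meet0.
  apply (ns_compat hP (f a *g f b *g ginv (f b *g f a))).
  - rewrite !hfun_mul, hom_inv, hfun_mul. reflexivity.
  - exact (Mab (f a) (f b) (Mf a) (Mf b)).
Qed.
End Maximal.

Hypotheses (hA : hyperabelian A) (sX : simple X) (nX : nonabelian X).

Lemma hyperabelian_kills_simple : forall x, f x =g gone.
Proof.
  destruct (hom_simple_dichotomy _ _ f sX) as [K|If]; [exact K|]. exfalso.
  destruct (exists_maximal_avoiding If) as [Y0 [[hP meet0] Max]].
  destruct (proj1 sX) as [h0 Nh0].
  destruct (hA _ hP) as [M [hM [Mab [x0 [Mx0 Nx0]]]]].
  { exists (f h0). intro E. apply Nh0, meet0.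
    apply (ns_compat hP (f h0 *g ginv gone)); [gsimpl; reflexivity | exact E]. }
  destruct (proj2 sX _ (preim_normal (hcomp f (projQ hP)) hM)) as [Kf|Kf].
  - apply (Max M).
    + exact (quot_normal_contains Y0 hP M hM).
    + intro S. apply Nx0. simpl. apply (ns_compat hP x0); [gsimpl; reflexivity|].
      right. apply S, Mx0.
    + split; [exact (quot_normal_lift Y0 hP M hM)|].
      intros h Mh. apply Kf, (quot_normal_with_one Y0 hP M hM), Mh.
  - destruct nX as [a [b Nab]]. apply Nab.
    exact (commutators_trivial_of_abelian Y0 hP meet0 M Mab Kf a b).
Qed.
End Hyperabelian.

(* Two homomorphisms out of [Aut(H)] agreeing on [Inn(H)] agree everywhere when the
   image of [Inn(H)] has trivial centralizer: for [a] in [Aut(H)], both [rho a] and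
   [phi a] conjugate [phi c_h] to [phi c_(a h)]. *)
Lemma homs_agree_of_inner (H Y : grp) (rho phi : hom (autg H) Y) :
  (forall h, rho (innaut h) =g phi (innaut h)) ->
  (forall y, (forall h, commute y (phi (innaut h))) -> y =g gone) ->
  forall a, rho a =g phi a.
Proof.
  intros Agree Cent a. symmetry. apply eq_of_ldiv, Cent. intro h.
  apply commute_ldiv_of_conj.
  assert (Ea : @geq (autg H) ((a : autg H) *g innaut h *g ginv (a : autg H)) (innaut (a h)))
    by apply conj_innaut.
  transitivity (phi (innaut (a h))).
  - rewrite <- hom_conj, Ea. reflexivity.
  - rewrite <- Agree, <- Ea, hom_conj, Agree. reflexivity.
Qed.

Definition unique_extension {X Y : grp} (j : hom X Y) (phi : hom X Y) : Prop :=
  exists psi : hom Y Y, (forall x, psi (j x) =g phi x) /\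
    (forall psi' : hom Y Y, (forall x, psi' (j x) =g phi x) -> forall y, psi' y =g psi y).

Section Main.
Variables (H G : grp) (i : hom H G) (j : hom (autg H) (autg G))
  (k : hom (outg H) (outg G)) (pi : hom (outg H) (autH_mod_N j)).
Hypotheses (iinj : injective i) (iloc : localization i) (sH : simple H) (nH : nonabelian H)
  (sG : simple G) (zG : trivial_center G) (cG : cohopfian G) (cA : cohopfian (autg G))
  (hyp : hyperabelian (outg G)) (hj : forall h : H, j (innaut h) =g innaut (i h))
  (hk : forall a : outg H, @geq (outg G) (k a) (j a))
  (hpi : forall a : outg H, @geq (autH_mod_N j) (pi a) a).

(* A homomorphism out of [Aut(G)] killing every [c_(i h)] kills [Inn(G)]: by simplicity
   of [G] the map [g |-> psi c_g] is trivial or injective, and it is not injective. *)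
Lemma kills_inner (Y : grp) (psi : hom (autg G) Y) :
  (forall h, psi (innaut (i h)) =g gone) -> forall a, inner a -> psi a =g gone.
Proof.
  intros K a [g Eg].
  destruct (hom_simple_dichotomy _ _ (hcomp (innhom G) psi) sG) as [T|I].
  - transitivity (psi (innaut g)); [apply hfun_compat; exact Eg | apply T].
  - exfalso. destruct (proj1 sH) as [h0 Nh0]. apply Nh0, iinj.
    rewrite hom_one. apply I. change (psi (innaut (i h0)) =g hcomp (innhom G) psi gone).
    rewrite K, hom_one. reflexivity.
Qed.

Lemma extension_kills_inner (psi : hom (autg G) (autg G)) (phi : hom (autg H) (autg G)) :
  (forall x, psi (j x) =g phi x) -> (forall h, phi (innaut h) =g gone) ->
  forall a, inner a -> psi a =g gone.
Proof. intros E K. apply kills_inner. intro h. rewrite <- hj, E. apply K. Qed.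

Lemma innaut_in_N (h : H) : @geq (autH_mod_N j) (innaut h) gone.
Proof.
  simpl. apply (ns_compat (inn_normal G) (innaut (i h))); [|apply inner_innaut].
  change (@geq (autg G) (innaut (i h))
            (j (@gmul (autg H) (innaut h) (@ginv (autg H) (@gone (autg H)))))).
  rewrite hfun_mul, hom_inv, hom_one, hj. symmetry. apply (@gmul1r (autg G)).
Qed.

Definition out_lift (psi : hom (autg G) (autg G)) (K : forall a, inner a -> psi a =g gone) :
  hom (outg G) (autg G) := quot_lift (inn_normal G) psi K.

Definition N_lift (phi : hom (autg H) (autg G)) (K : forall a, inner (j a) -> phi a =g gone) :
  hom (autH_mod_N j) (autg G) := quot_lift (preim_normal j (inn_normal G)) phi K.

(* (b) is the uniqueness part of the universal property of [j]. *)
Lemma fwd_b : localization j -> cond_b j.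
Proof.
  intros L th E b. exact (localization_ext j L (hom_of_aut th) (idhom _) E b).
Qed.

(* (d): an extension of [phi] killing [Inn(H)] kills [Inn(G)], so [phi] kills [N]. *)
Lemma fwd_d : localization j -> cond_d j.
Proof.
  intros L phi K a Na. destruct (L phi) as [psi [E _]].
  rewrite <- E. apply (extension_kills_inner psi phi E); [|exact Na].
  intro h. apply K, inner_innaut.
Qed.

(* (c): extensions along [j] of maps factoring through [Aut(H)/N] factor through [Out(G)]. *)
Lemma fwd_c : localization j -> cond_c j k pi.
Proof.
  intros L phi'. destruct (L (hcomp (projQ _) phi')) as [psi [E U]].
  assert (K : forall a, inner a -> psi a =g gone).
  { apply (extension_kills_inner psi _ E). intro h.
    transitivity (phi' gone); [apply (hfun_compat phi'), innaut_in_N | apply hom_one]. }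
  exists (out_lift psi K). split.
  - intro x. transitivity (psi (j x)); [apply (hfun_compat (out_lift psi K)), hk|].
    rewrite E. symmetry. apply (hfun_compat phi'), hpi.
  - intros psi'' E'' y. apply (U (hcomp (projQ _) psi'')). intro x.
    transitivity (psi'' (k x)).
    + apply (hfun_compat psi'' (j x) (k x)). apply (@geq_sym (outg G)), hk.
    + rewrite E''. apply (hfun_compat phi'), hpi.
Qed.

Lemma extension_of_trivial_on_inner (phi : hom (autg H) (autg G)) :
  cond_c j k pi -> cond_d j -> (forall h, phi (innaut h) =g gone) -> unique_extension j phi.
Proof.
  intros Hc Hd K.
  assert (KN : forall a, inner (j a) -> phi a =g gone).
  { apply Hd. intros a [h Eh]. rewrite (hfun_compat phi _ (innaut h) Eh). apply K. }
  destruct (Hc (N_lift phi KN)) as [psi' [E' U']].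
  exists (hcomp (projQ _) psi'). split.
  - intro x. transitivity (psi' (k x)).
    + apply (hfun_compat psi' (j x) (k x)). apply (@geq_sym (outg G)), hk.
    + rewrite E'. apply (hfun_compat (N_lift phi KN)), hpi.
  - intros psi2 E2 y.
    pose proof (extension_kills_inner psi2 phi E2 K) as K2.
    apply (U' (out_lift psi2 K2)). intro x. transitivity (psi2 (j x)).
    + apply (hfun_compat (out_lift psi2 K2)), hk.
    + rewrite E2. symmetry. apply (hfun_compat (N_lift phi KN)), hpi.
Qed.

(* Since [Out(G)] is hyperabelian, every [phi c_h] is inner. *)
Lemma inner_on_inner (phi : hom (autg H) (autg G)) (h : H) : inner (phi (innaut h)).
Proof.
  pose proof (hyperabelian_kills_simple (outg G) H
                (hcomp (hcomp (innhom H) phi) (projQ _)) hyp sH nH h) as E.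
  apply (ns_compat (inn_normal G) _ _ (fun z => geq_refl _) E).
Qed.

(* If [phi] is injective on [Inn(H)], then [phi c_h = c_(alpha (i h))] for some
   [alpha] in [Aut(G)]: [phi c_h = c_(f h)] for a homomorphism [f : H -> G], which
   extends along the localization [i] to an automorphism. *)
Lemma conjugating_aut (phi : hom (autg H) (autg G)) :
  (forall h, phi (innaut h) =g gone -> h =g gone) ->
  exists alpha : aut G, forall h, @geq (autg G) (phi (innaut h)) (innaut (alpha (i h))).
Proof.
  intro F.
  destruct (inner_hom_lift H G (hcomp (innhom H) phi) zG (inner_on_inner phi)) as [f Ef].
  destruct (localization_extends_to_aut i iloc sG cG f) as [alpha Ea].
  - destruct (proj1 sH) as [h0 Nh0]. exists h0. intro E0. apply Nh0, F.
    transitivity (innhom G (f h0)); [exact (Ef h0)|].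
    rewrite E0. apply hom_one.
  - exists alpha. intro h. rewrite Ea. apply Ef.
Qed.

Section Conjugation.
Variables (phi : hom (autg H) (autg G)) (alpha : aut G).
Hypothesis (Ealpha : forall h, @geq (autg G) (phi (innaut h)) (innaut (alpha (i h)))).

(* Conjugation by [alpha] in [Aut(G)] extends [phi] along [j]: both agree on [Inn(H)],
   and the image [alpha c_(i H) alpha^-1] of [Inn(H)] has trivial centralizer. *)
Lemma conj_extends : forall a, conjhom (alpha : autg G) (j a) =g phi a.
Proof.
  apply homs_agree_of_inner with (rho := hcomp j (conjhom (alpha : autg G))).
  - intro h. change (conjhom (alpha : autg G) (j (innaut h)) =g phi (innaut h)).
    rewrite hj, Ealpha. apply conj_innaut.
  - intros y C. apply (conj_trivial _ (alpha : autg G)).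
    apply (localization_centralizer i iloc zG). intro h. apply commute_conj.
    specialize (C h). unfold commute in *. rewrite Ealpha, <- conj_innaut in C. exact C.
Qed.

(* Any extension of [phi] along [j] is conjugation by [alpha], by condition (b):
   composed with conjugation by [alpha^-1] it becomes an injective, hence bijective,
   endomorphism of [Aut(G)] fixing the image of [j]. *)
Lemma conj_unique_extension : cond_b j -> (forall h, phi (innaut h) =g gone -> h =g gone) ->
  forall psi : hom (autg G) (autg G), (forall a, psi (j a) =g phi a) ->
  forall y, psi y =g conjhom (alpha : autg G) y.
Proof.
  intros Hb F psi E.
  assert (Kpsi : forall g, psi (innaut g) =g gone -> g =g gone).
  { destruct (hom_simple_dichotomy _ _ (hcomp (innhom G) psi) sG) as [T|I].
    - exfalso. destruct (proj1 sH) as [h0 Nh0]. apply Nh0, F.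
      transitivity (psi (j (innaut h0))); [symmetry; apply E|]. rewrite hj. apply T.
    - intros g Eg. apply I. change (psi (innaut g) =g hcomp (innhom G) psi gone).
      rewrite Eg, hom_one. reflexivity. }
  pose (theta := hcomp psi (conjhom (ginv (alpha : autg G)))).
  assert (Itheta : injective theta).
  { intros x y Exy. apply (hom_aut_injective G _ psi zG Kpsi).
    exact (aut_injective _ (innaut (ginv (alpha : autg G))) _ _ Exy). }
  pose (thetaa := aut_of_bij (autg G) theta Itheta (cA theta Itheta)).
  assert (Fix : forall a, thetaa (j a) =g j a).
  { intro a. change (@geq (autg G) (conjhom (ginv (alpha : autg G)) (psi (j a))) (j a)).
    rewrite E, <- conj_extends. exact (ainv_afun (innaut (alpha : autg G)) (j a)). }
  intro y. transitivity (conjhom (alpha : autg G) (theta y)).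
  - symmetry. exact (afun_ainv (innaut (alpha : autg G)) (psi y)).
  - apply hfun_compat. exact (Hb thetaa Fix y).
Qed.
End Conjugation.

Lemma extension_of_faithful_on_inner (phi : hom (autg H) (autg G)) :
  cond_b j -> (forall h, phi (innaut h) =g gone -> h =g gone) -> unique_extension j phi.
Proof.
  intros Hb F. destruct (conjugating_aut phi F) as [alpha Ealpha].
  exists (conjhom (alpha : autg G)). split.
  - exact (conj_extends phi alpha Ealpha).
  - exact (conj_unique_extension phi alpha Ealpha Hb F).
Qed.

Lemma localization_iff : localization j <-> cond_b j /\ cond_c j k pi /\ cond_d j.
Proof.
  split.
  - intro L. split; [|split]; [exact (fwd_b L) | exact (fwd_c L) | exact (fwd_d L)].
  - intros [Hb [Hc Hd]] phi.
    destruct (hom_simple_dichotomy _ _ (hcomp (innhom H) phi) sH) as [T|I].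
    + exact (extension_of_trivial_on_inner phi Hc Hd T).
    + apply (extension_of_faithful_on_inner phi Hb). intros h Eh. apply I.
      change (phi (innaut h) =g hcomp (innhom H) phi gone). rewrite Eh, hom_one. reflexivity.
Qed.

(* If [Aut(G)] is complete, (b) holds: an automorphism [theta = c_beta] fixing the
   image of [j] has [beta] commuting with every [c_(i h)], so [beta = 1]. *)
Lemma cond_b_of_complete : complete (autg G) -> cond_b j.
Proof.
  intros [_ Inn] th Fix b. destruct (Inn th) as [be Ebe].
  assert (Be : @geq (autg G) be gone).
  { apply (localization_centralizer i iloc zG be). intro h. apply commute_of_conj_fix.
    transitivity (th (innaut (i h))); [symmetry; apply Ebe|].
    rewrite <- hj. apply Fix. }
  rewrite Ebe. unfold conj. rewrite Be. gsimpl. reflexivity.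
Qed.
End Main.

Theorem theorem3p5 (H G : grp) (i : hom H G)
  (j : hom (autg H) (autg G))
  (k : hom (outg H) (outg G))
  (pi : hom (outg H) (autH_mod_N j)) :
  injective i -> localization i ->
  simple H -> nonabelian H -> simple G -> nonabelian G ->
  cohopfian G -> cohopfian (autg G) -> complete (autg H) -> hyperabelian (outg G) ->
  injective j ->
  (forall h : H, j (innaut h) =g innaut (i h)) ->
  (forall a : outg H, @geq (outg G) (k a) (j a)) ->
  (forall a : outg H, @geq (autH_mod_N j) (pi a) a) ->
  (localization j <-> cond_b j /\ cond_c j k pi /\ cond_d j) /\
  (complete (autg G) -> (localization j <-> cond_c j k pi /\ cond_d j)).
Proof.
  intros iinj iloc sH nH sG nG cG cA _ hyp _ hj hk hpi.
  pose proof (simple_trivial_center G sG nG) as zG.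
  assert (Iff : localization j <-> cond_b j /\ cond_c j k pi /\ cond_d j)
    by (eapply localization_iff; eassumption).
  split; [exact Iff|].
  intro Complete.
  assert (Hb : cond_b j) by (eapply cond_b_of_complete; eassumption).
  tauto.
Qed.
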